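(* Let $V$ be a vertex operator algebra, $\rho:P\to V$ a covering of $V$ in $\mathrm{mod}(V)$, and $p\in P$ a homogeneous element with $\rho(p)=\mathbf{1}$. Then $$\mathrm{Ker}(\rho)=\mathrm{span}_{\mathbb{C}}\{v_np\mid v\in V,\ n\ge0\}.$$
   Context: $\mathrm{mod}(V)$: $\mathbb{N}$-graded $V$-modules with composition series of finite length. A surjective $V$-homomorphism $\rho:P\to V$ is a covering if $P$ is the only submodule of $P$ mapping onto $V$. For $v\in V$, $v_n$ denotes the coefficient of $z^{-n-1}$ in the vertex operator $Y^P(v,z)$ on $P$. *)

From HB Require Import structures.
From mathcomp Require Import all_boot all_order all_algebra.
From mathcomp Require Import reals Rstruct complex.
Set Implicit Arguments. Unset Strict Implicit. Unset Printing Implicit Defensive.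
Import Order.TTheory GRing.Theory Num.Theory.
Local Open Scope ring_scope.

Definition C : numClosedFieldType := (Rdefinitions.R)[i].

Definition intbin (m : int) (i : nat) : C :=
  (\prod_(j < i) ((m - (j : nat)%:Z)%:~R : C)) / (i`!)%:R.

Section VertexAlgebraDefs.
Variable V : lmodType C.

(* Vertex operators are encoded by their modes:  Y u w n = u_n w,
   the coefficient of z^{-n-1} in Y(u,z) w. *)

Section ModuleDefs.
Variable M : lmodType C.

Definition subspace (S : M -> Prop) : Prop :=
  S 0 /\ forall (a : C) (x y : M), S x -> S y -> S (a *: x + y).

Definition in_span (S : M -> Prop) (w : M) : Prop :=
  exists s : seq (C * M), (forall x, x \in s -> S x.2) /\
                          w = \sum_(x <- s) x.1 *: x.2.

Definition is_module (Y : V -> V -> int -> V) (one : V)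
    (YM : V -> M -> int -> M) : Prop :=
  [/\
      (forall (a : C) (u1 u2 : V) (w : M) (n : int),
          YM (a *: u1 + u2) w n = a *: YM u1 w n + YM u2 w n),
      (forall (a : C) (u : V) (w1 w2 : M) (n : int),
          YM u (a *: w1 + w2) n = a *: YM u w1 n + YM u w2 n),
      (forall (u : V) (w : M), exists N : int,
          forall n : int, N <= n -> YM u w n = 0),
      (forall (w : M) (n : int), YM one w n = if n == -1 then w else 0) &
      (* Jacobi identity, in component (Borcherds) form; all sums are finite
         and the bound N is any bound beyond which all terms vanish *)
      (forall (u v : V) (w : M) (m n k : int) (N : nat),
          (forall i : nat, (N <= i)%N ->
             [/\ Y u v (k + i%:Z) = 0, YM v w (n + i%:Z) = 0 &
                 YM u w (m + i%:Z) = 0]) ->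
          \sum_(i < N) intbin m i *: YM (Y u v (k + i%:Z)) w (m + n - i%:Z) =
          \sum_(i < N) ((-1) ^+ i * intbin k i) *:
             (YM u (YM v w (n + i%:Z)) (m + k - i%:Z)
              - (-1) ^ k *: YM v (YM u w (m + i%:Z)) (n + k - i%:Z)))].

(* N-graded module: M = (+)_{k in N} M(k) with v_m M(k) <= M(wt v + k - m - 1)
   for v homogeneous of weight wt v (i.e. L(0) v = (wt v) v), L(0) = omega_1. *)
Definition is_Ngraded (Y : V -> V -> int -> V) (omega : V)
    (YM : V -> M -> int -> M) (gr : nat -> M -> Prop) : Prop :=
  [/\ (forall k, subspace (gr k)),
      (forall w : M, exists s : seq (nat * M),
          (forall x, x \in s -> gr x.1 x.2) /\ w = \sum_(x <- s) x.2),
      (forall (N : nat) (f : 'I_N -> M),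
          (forall i : 'I_N, gr i (f i)) -> \sum_(i < N) f i = 0 ->
          forall i, f i = 0) &
      (forall (v : V) (d : int) (w : M) (k : nat) (m : int),
          Y omega v 1 = d%:~R *: v -> gr k w ->
          if (0 <= d + k%:Z - m - 1)%R then gr (absz (d + k%:Z - m - 1)%R) (YM v w m)
          else YM v w m = 0)].

Definition submodule (YM : V -> M -> int -> M) (S : M -> Prop) : Prop :=
  subspace S /\ forall (v : V) (n : int) (w : M), S w -> S (YM v w n).

Definition finite_length (YM : V -> M -> int -> M) : Prop :=
  exists (k : nat) (S : nat -> M -> Prop),
    [/\ (forall i, submodule YM (S i)),
        (forall w, S 0%N w <-> w = 0),
        (forall w, S k w) &
        (forall i, (i < k)%N ->
           [/\ (forall w, S i w -> S i.+1 w),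
               (exists w, S i.+1 w /\ ~ S i w) &
               (forall T, submodule YM T ->
                  (forall w, S i w -> T w) -> (forall w, T w -> S i.+1 w) ->
                  (forall w, T w <-> S i w) \/ (forall w, T w <-> S i.+1 w))])].

End ModuleDefs.

Definition is_VOA (Y : V -> V -> int -> V) (one omega : V) (c : C) : Prop :=
  let L := fun (n : int) (v : V) => Y omega v (n + 1) in
  [/\ is_module Y one Y,
      (forall u : V, Y u one (-1) = u /\ forall n : int, 0 <= n -> Y u one n = 0),
      (forall (m n : int) (v : V),
          L m (L n v) - L n (L m v) =
          (m - n)%:~R *: L (m + n) v
          + (if m + n == 0 then ((m ^+ 3 - m)%:~R / 12%:R) * c else 0) *: v),
      (* L(-1)-derivative property: Y(L(-1)u, z) = d/dz Y(u, z) *)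
      (forall (u v : V) (n : int), Y (L (-1) u) v n = - n%:~R *: Y u v (n - 1)) &
      [/\ (forall v : V, exists s : seq (int * V),
              (forall x, x \in s -> L 0 x.2 = x.1%:~R *: x.2) /\
              v = \sum_(x <- s) x.2),
          (forall n : int, exists s : seq V,
              forall v, L 0 v = n%:~R *: v -> in_span (fun x => x \in s) v) &
          (exists N : int, forall (n : int) (v : V),
              n < N -> L 0 v = n%:~R *: v -> v = 0)]].

Section Morphisms.
Variables (M1 M2 : lmodType C).

Definition is_hom (YM1 : V -> M1 -> int -> M1) (YM2 : V -> M2 -> int -> M2)
    (f : M1 -> M2) : Prop :=
  (forall (a : C) (x y : M1), f (a *: x + y) = a *: f x + f y) /\
  (forall (v : V) (w : M1) (n : int), f (YM1 v w n) = YM2 v (f w) n).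

Definition is_covering (YM1 : V -> M1 -> int -> M1) (YM2 : V -> M2 -> int -> M2)
    (f : M1 -> M2) : Prop :=
  [/\ is_hom YM1 YM2 f,
      (forall y : M2, exists x : M1, f x = y) &
      (forall S : M1 -> Prop, submodule YM1 S ->
         (forall y : M2, exists x, S x /\ f x = y) -> forall x, S x)].
End Morphisms.

End VertexAlgebraDefs.

From HB Require Import structures.
From mathcomp Require Import all_boot all_order all_algebra.
From mathcomp Require Import reals Rstruct complex.
From mathcomp Require Import zify.
Set Implicit Arguments. Unset Strict Implicit. Unset Printing Implicit Defensive.
Import Order.TTheory GRing.Theory Num.Theory.
Local Open Scope ring_scope.

(* The span W of all modes v_n p is stable under every mode u_m: by the
   Jacobi identity, u_m v_n p is a combination of modes (u_j v)_l p and of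
   terms u_(m-i) v_(n+i) p with i > 0, which lie in W by descending induction
   on n (v_n p vanishes for n large).  As W contains v_(-1) p with
   rho (v_(-1) p) = v, W is a submodule onto V, hence W = P by the covering
   property.  Finally y |-> y - (rho y)_(-1) p is linear, is the identity on
   Ker rho, kills v_n p for n < 0 (because (v_n 1)_(-1) p = v_n p) and fixes
   v_n p for n >= 0 (because v_n 1 = 0). *)

Lemma sum_ord_head (M : nmodType) (N : nat) (F : 'I_N.+1 -> M) :
  (forall i : 'I_N, F (lift ord0 i) = 0) -> \sum_(i < N.+1) F i = F ord0.
Proof. by move=> F0; rewrite big_ord_recl big1 ?addr0. Qed.

Section Span.
Variable M : lmodType C.
Implicit Types (G : M -> Prop) (x y : M).

Lemma span0 G : in_span G 0.
Proof. by exists [::]; split => //; rewrite big_nil. Qed.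

Lemma span_gen G y : G y -> in_span G y.
Proof.
move=> Gy; exists [:: (1, y)]; split; first by move=> x; rewrite inE => /eqP ->.
by rewrite big_seq1 scale1r.
Qed.

Lemma spanD G x y : in_span G x -> in_span G y -> in_span G (x + y).
Proof.
move=> [s1 [H1 ->]] [s2 [H2 ->]]; exists (s1 ++ s2); split; last by rewrite big_cat.
by move=> z; rewrite mem_cat => /orP [/H1|/H2].
Qed.

Lemma spanZ G a x : in_span G x -> in_span G (a *: x).
Proof.
move=> [s [H ->]]; exists [seq (a * z.1, z.2) | z <- s]; split.
  by move=> z /mapP [z' Hz' ->] /=; apply: H.
by rewrite big_map scaler_sumr; apply: eq_bigr => z _; rewrite scalerA.
Qed.

Lemma spanDr G x y : in_span G y -> in_span G (x + y) -> in_span G x.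
Proof.
by move=> Gy Gxy; have := spanD Gxy (spanZ (-1) Gy); rewrite scaleN1r addrK.
Qed.

Lemma span_sum G N (f : 'I_N -> M) :
  (forall i, in_span G (f i)) -> in_span G (\sum_(i < N) f i).
Proof. by move=> Gf; apply: big_ind => //; [apply: span0 | apply: spanD]. Qed.

Lemma span_subspace G : subspace (in_span G).
Proof. by split; [apply: span0 | move=> a x y Gx Gy; apply: spanD => //; apply: spanZ]. Qed.

End Span.

Definition linear_fun (M1 M2 : lmodType C) (f : M1 -> M2) : Prop :=
  forall a x y, f (a *: x + y) = a *: f x + f y.

Section LinearFun.
Variables (M1 M2 : lmodType C) (f : M1 -> M2).
Hypothesis f_lin : linear_fun f.

Lemma linear_fun0 : f 0 = 0.
Proof.
have := f_lin 1 0 0; rewrite scaler0 addr0 scale1r => f00.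
by apply: (addrI (f 0)); rewrite addr0 -f00.
Qed.

Lemma linear_funD x y : f (x + y) = f x + f y.
Proof. by have := f_lin 1 x y; rewrite !scale1r. Qed.

Lemma linear_funZ a x : f (a *: x) = a *: f x.
Proof. by have := f_lin a x 0; rewrite linear_fun0 !addr0. Qed.

Lemma linear_fun_span G G' x :
  (forall y, G y -> in_span G' (f y)) -> in_span G x -> in_span G' (f x).
Proof.
move=> fG [s [Gs ->]]; elim: s Gs => [|z s IH] Gs.
  by rewrite big_nil linear_fun0; apply: span0.
rewrite big_cons linear_funD linear_funZ; apply: spanD.
  by apply/spanZ/fG/Gs; rewrite inE eqxx.
by apply: IH => y ys; apply: Gs; rewrite inE ys orbT.
Qed.

Lemma linear_fun_span_eq0 G x :
  (forall y, G y -> f y = 0) -> in_span G x -> f x = 0.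
Proof.
move=> fG [s [Gs ->]]; elim: s Gs => [|z s IH] Gs; first by rewrite big_nil linear_fun0.
rewrite big_cons linear_funD linear_funZ fG ?scaler0 ?add0r; last by apply: Gs; rewrite inE eqxx.
by apply: IH => y ys; apply: Gs; rewrite inE ys orbT.
Qed.

End LinearFun.

Lemma intbin0 m : intbin m 0 = 1.
Proof. by rewrite /intbin big_ord0 mul1r fact0 invr1. Qed.

Lemma intbin0S i : intbin 0 i.+1 = 0.
Proof. by rewrite /intbin big_ord_recl subr0 !mul0r. Qed.

Section Modes.
Variables (V : lmodType C) (Y : V -> V -> int -> V) (one : V).
Hypothesis Y_trunc : forall u v : V, exists N : int, forall n, N <= n -> Y u v n = 0.
Variables (P : lmodType C) (YP : V -> P -> int -> P).
Hypothesis YP_module : is_module Y one YP.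

Definition modes (w y : P) : Prop := exists v n, y = YP v w n.

Definition nonneg_modes (w y : P) : Prop := exists v n, 0 <= n /\ y = YP v w n.

Lemma YP_linear_l w n : linear_fun (fun u => YP u w n).
Proof. by move=> a u1 u2; case: YP_module => lin_l *; apply: lin_l. Qed.

Lemma YP_linear_r u n : linear_fun (fun w => YP u w n).
Proof. by move=> a w1 w2; case: YP_module => _ lin_r *; apply: lin_r. Qed.

Lemma YP_trunc u w : exists N : int, forall n, N <= n -> YP u w n = 0.
Proof. by case: YP_module => _ _ trunc *; apply: trunc. Qed.

Lemma YP_one w n : YP one w n = if n == -1 then w else 0.
Proof. by case: YP_module => _ _ _ vac *; apply: vac. Qed.

Lemma YP_one_neq w n : n != -1 -> YP one w n = 0.
Proof. by rewrite YP_one => /negPf ->. Qed.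

Lemma YP0r u n : YP u 0 n = 0.
Proof. exact: (linear_fun0 (YP_linear_r u n)). Qed.

Lemma YP_Jacobi u v w (m n k : int) (N : nat) :
  (forall i : nat, (N <= i)%N ->
     [/\ Y u v (k + i%:Z) = 0, YP v w (n + i%:Z) = 0 & YP u w (m + i%:Z) = 0]) ->
  \sum_(i < N) intbin m i *: YP (Y u v (k + i%:Z)) w (m + n - i%:Z) =
  \sum_(i < N) ((-1) ^+ i * intbin k i) *:
     (YP u (YP v w (n + i%:Z)) (m + k - i%:Z)
      - (-1) ^ k *: YP v (YP u w (m + i%:Z)) (n + k - i%:Z)).
Proof. by case: YP_module => _ _ _ _ jacobi; apply: jacobi. Qed.

(* Jacobi identity at (u, 1, w) with m = 0, n = -1: only the i = 0 terms survive. *)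
Lemma YP_vacuum_mode v w n : n < 0 -> YP (Y v one n) w (-1) = YP v w n.
Proof.
move=> n_lt0; have [K1 HK1] := Y_trunc v one; have [K2 HK2] := YP_trunc v w.
pose N := (absz (K1 - n) + absz K2)%N.
have vanish i : (N.+1 <= i)%N ->
    [/\ Y v one (n + i%:Z) = 0, YP one w (-1 + i%:Z) = 0 & YP v w (0 + i%:Z) = 0].
  by move=> Ni; split; [apply: HK1 | apply: YP_one_neq | apply: HK2]; lia.
have := YP_Jacobi vanish.
rewrite !sum_ord_head => [|i|i]; last by rewrite lift0 intbin0S scale0r.
  rewrite /= !intbin0 expr0 mul1r !scale1r !addr0 !add0r YP_one eqxx.
  by rewrite (YP_one_neq (YP v w 0)) ?scaler0 ?subr0 //; lia.
by rewrite lift0 YP_one_neq ?YP0r ?YP_one_neq ?scaler0 ?subr0 ?scaler0 //; lia.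
Qed.

Lemma span_modes_stable w u m v n : in_span (modes w) (YP u (YP v w n) m).
Proof.
have [Nv HNv] := YP_trunc v w.
suff IH d : forall n, Nv - n <= d%:Z -> forall u m, in_span (modes w) (YP u (YP v w n) m).
  by apply: (IH (absz (Nv - n))); lia.
elim: d => [|d IH] {}n n_le {}u {}m.
  by rewrite HNv ?YP0r; [apply: span0 | lia].
have [Nv_le|n_lt] := leP Nv n; first by rewrite HNv // YP0r; apply: span0.
have [Mu HMu] := YP_trunc u w; have [K HK] := Y_trunc u v.
pose k := m - Mu; pose N := (absz (K - k)%R + absz (Nv - n - 1)%R)%N.
have vanish i : (N.+1 <= i)%N ->
    [/\ Y u v (k + i%:Z) = 0, YP v w (n + i%:Z) = 0 & YP u w (Mu + i%:Z) = 0].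
  by move=> Ni; split; [apply: HK | apply: HNv | apply: HMu]; rewrite /k in Ni *; lia.
have lhs_in : in_span (modes w)
    (\sum_(i < N.+1) intbin Mu i *: YP (Y u v (k + i%:Z)) w (Mu + n - i%:Z)).
  by apply: span_sum => i; apply/spanZ/span_gen; exists (Y u v (k + i%:Z)), (Mu + n - i%:Z).
have Mu_k : Mu + k = m by rewrite /k addrC subrK.
rewrite (YP_Jacobi vanish) big_ord_recl expr0 intbin0 mul1r scale1r addr0 subr0 in lhs_in.
rewrite HMu ?addr0 // YP0r scaler0 subr0 Mu_k in lhs_in.
apply: spanDr lhs_in; apply: span_sum => i; apply: spanZ.
rewrite lift0 HMu ?YP0r ?scaler0 ?subr0; last by lia.
by apply: IH; lia.
Qed.

Lemma span_modes_submodule w : submodule YP (in_span (modes w)).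
Proof.
split; first exact: span_subspace.
move=> u m x; apply: (linear_fun_span (YP_linear_r u m)) => _ [v [n ->]].
exact: span_modes_stable.
Qed.

Variables (rho : P -> V) (p : P).
Hypothesis rho_hom : is_hom YP Y rho.
Hypothesis rho_p : rho p = one.
Hypothesis Y_creation :
  forall u : V, Y u one (-1) = u /\ forall n : int, 0 <= n -> Y u one n = 0.

Lemma rho_nonneg_mode v n : 0 <= n -> rho (YP v p n) = 0.
Proof. by case: rho_hom => _ -> n_ge0; rewrite rho_p (proj2 (Y_creation v)). Qed.

Lemma rho_mode_neg1 v : rho (YP v p (-1)) = v.
Proof. by case: rho_hom => _ ->; rewrite rho_p (proj1 (Y_creation v)). Qed.

Lemma ker_rho_in_span_nonneg_modes x :
  in_span (modes p) x -> rho x = 0 -> in_span (nonneg_modes p) x.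
Proof.
move=> x_in rho_x0; have [rho_lin rho_YP] := rho_hom.
pose g y := y - YP (rho y) p (-1).
have g_lin : linear_fun g.
  by move=> a y1 y2; rewrite /g rho_lin (YP_linear_l p (-1)) scalerBr opprD addrACA.
have gx : g x = x by rewrite /g rho_x0 (linear_fun0 (YP_linear_l p (-1))) subr0.
rewrite -gx; apply: (linear_fun_span g_lin) x_in => _ [v [n ->]].
have [n_ge0|n_lt0] := leP 0 n.
  rewrite /g rho_nonneg_mode // (linear_fun0 (YP_linear_l p (-1))) subr0.
  by apply: span_gen; exists v, n.
by rewrite /g rho_YP rho_p YP_vacuum_mode // subrr; apply: span0.
Qed.

Lemma span_nonneg_modes_in_ker x : in_span (nonneg_modes p) x -> rho x = 0.
Proof.
have [rho_lin _] := rho_hom.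
by apply: linear_fun_span_eq0 => // _ [v [n [n_ge0 ->]]]; apply: rho_nonneg_mode.
Qed.

End Modes.

Theorem lemma12
  (V : lmodType C) (Y : V -> V -> int -> V) (one omega : V) (c : C)
  (HV : is_VOA Y one omega c)
  (grV : nat -> V -> Prop)
  (HgrV : is_Ngraded Y omega Y grV) (HlenV : finite_length Y)
  (P : lmodType C) (YP : V -> P -> int -> P) (grP : nat -> P -> Prop)
  (HP : is_module Y one YP) (HgrP : is_Ngraded Y omega YP grP)
  (HlenP : finite_length YP)
  (rho : P -> V) (Hrho : is_covering YP Y rho)
  (p : P) (Hp_hom : exists k : nat, grP k p) (Hp : rho p = one) :
  forall x : P,
    rho x = 0 <->
    in_span (fun y : P => exists (v : V) (n : int), 0 <= n /\ y = YP v p n) x.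
Proof.
case: HV => [[_ _ Y_trunc _ _] Y_creation _ _ _].
case: Hrho => rho_hom _ rho_cover.
have W_submodule := span_modes_submodule Y_trunc HP p.
have P_span_modes : forall x, in_span (modes YP p) x.
  apply: (rho_cover _ W_submodule) => v; exists (YP v p (-1)).
  split; first by apply: span_gen; exists v, (-1).
  exact: rho_mode_neg1 rho_hom Hp Y_creation v.
move=> x; split => [rho_x0 | x_in].
  exact: (ker_rho_in_span_nonneg_modes Y_trunc HP rho_hom Hp Y_creation
            (P_span_modes x) rho_x0).
exact: (span_nonneg_modes_in_ker rho_hom Hp Y_creation x_in).
Qed.
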